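(* For every integer $n>16$, the generalized Petersen graph $GP(n,3)$ is not $2$-distance-balanced.
   Context: For a connected graph $G$ and $x,y\in V(G)$, $d_G(x,y)$ denotes the distance. Let $W_{xy}=\{w\in V(G): d_G(w,x)<d_G(w,y)\}$. $G$ is called $\ell$-distance-balanced if $|W_{xy}|=|W_{yx}|$ for every pair $x,y\in V(G)$ with $d_G(x,y)=\ell$. For integers $n\ge 3$ and $1\le k<n/2$, the generalized Petersen graph $GP(n,k)$ has vertex set $\{u_i: i\in\mathbb{Z}_n\}\cup\{v_i: i\in\mathbb{Z}_n\}$ and edge set $\{u_iu_{i+1}: i\in\mathbb{Z}_n\}\cup\{v_iv_{i+k}: i\in\mathbb{Z}_n\}\cup\{u_iv_i: i\in\mathbb{Z}_n\}$. *)

From mathcomp Require Import all_boot.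
Set Implicit Arguments. Unset Strict Implicit. Unset Printing Implicit Defensive.

Section Graphs.
Variable T : finType.
Variable e : rel T.

Definition ball (x : T) (k : nat) : {set T} :=
  iter k (fun S => S :|: [set y | [exists z in S, e z y]]) [set x].

(* graph distance d(x,y): least k with y in ball x k
   (for a connected graph this is < #|T|; otherwise #|T| is returned) *)
Definition dist (x y : T) : nat :=
  find (fun k => y \in ball x k) (iota 0 #|T|).

Definition Wset (x y : T) : {set T} := [set w | dist w x < dist w y].

Definition dist_balanced (l : nat) : Prop :=
  forall x y : T, dist x y = l -> #|Wset x y| = #|Wset y x|.
End Graphs.

(* Generalized Petersen graph GP(n,k): vertex (false,i) = u_i, (true,i) = v_i.
   Edges u_i u_{i+1}, v_i v_{i+k}, u_i v_i (indices mod n). *)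
Definition GP_vertex (n : nat) := (bool * 'I_n)%type.

Definition GP_adj (n k : nat) : rel (GP_vertex n) :=
  fun a b =>
    let: (sa, i) := a in let: (sb, j) := b in
    if sa == sb then
      (if sa then (j == (i + k) %% n :> nat) || (i == (j + k) %% n :> nat)
       else (j == (i + 1) %% n :> nat) || (i == (j + 1) %% n :> nat))
    else (i == j).
Arguments GP_adj n k : clear implicits.
Arguments dist_balanced {T} e l.

From mathcomp Require Import all_boot zify.
Set Implicit Arguments. Unset Strict Implicit.

(* Take x = u_0 and y = v_1, at distance 2.  Distances in GP(n,3) are read off the
   infinite cover of the graph (two copies of Z, rims of steps 1 and 3, spokes
   u_m v_m), where the distance D from u_0 or v_0 is an explicit function of the
   offset: min (D m) (D (n - m)) is the distance in GP(n,3), because it vanishes only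
   at the centre, is 1-Lipschitz along edges and decreases along some edge elsewhere.
   Now count, for each i, which of u_i, v_i are nearer to x or to y.  For
   3 <= i <= n - 3 the count at i in GP(n,3) is the count at i + 3 in GP(n+6,3),
   while for i near 0 (near n) it depends only on i (on n - i); so passing from n to
   n + 6 adds 3 vertices to W_xy and 5 to W_yx.  Since |W_xy| < |W_yx| for 17 <= n <= 22 by
   evaluation, this holds for every n > 16. *)

Lemma find_iota0 (P : pred nat) N k :
  k < N -> P k -> (forall j, j < k -> ~~ P j) -> find P (iota 0 N) = k.
Proof.
move=> kN Pk before_k.
have noP : ~~ has P (iota 0 k).
  by apply/hasPn => j; rewrite mem_iota add0n => /andP[_]; apply: before_k.
rewrite -(subnKC (ltnW kN)) iotaD find_cat (negbTE noP) size_iota add0n.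
by rewrite -subnSK //= Pk addn0.
Qed.

Section DistancePotential.
Variables (T : finType) (e : rel T) (x : T) (f : T -> nat).
Hypothesis f_lipschitz : forall z y, e z y -> f z <= (f y).+1.
Hypothesis f_descent : forall y, 0 < f y -> exists2 y', e y y' & f y' = (f y).-1.
Hypothesis f_eq0 : forall y, f y = 0 -> y = x.
Hypothesis f_x : f x = 0.

Lemma ballS w k :
  ball e w k.+1 = ball e w k :|: [set y | [exists z in ball e w k, e z y]].
Proof. by rewrite /ball iterS. Qed.

Lemma ball_potential w k y : y \in ball e w k -> f w <= f y + k.
Proof.
elim: k y => [|k IHk] y.
  by rewrite /ball /= in_set1 => /eqP ->; rewrite addn0.
rewrite ballS in_setU in_set => /orP[/IHk|/existsP[z /andP[/IHk fz /f_lipschitz]]];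
  lia.
Qed.

Lemma ball_descent w j : j <= f w -> exists2 y, y \in ball e w j & f y = f w - j.
Proof.
elim: j => [|j IHj] jw; first by exists w; rewrite ?subn0 // /ball in_set1.
have [y yw fy] := IHj (ltnW jw).
have [|y' yy' fy'] := f_descent (y := y); first lia.
exists y'; last lia.
by rewrite ballS in_setU in_set; apply/orP; right; apply/existsP; exists y; rewrite yw.
Qed.

Lemma dist_potential w : f w < #|T| -> dist e w x = f w.
Proof.
move=> fwT; apply: find_iota0 => // [|j jw].
  have [y yw] := ball_descent (leqnn (f w)).
  by rewrite subnn => /f_eq0 <-.
by apply/negP => /ball_potential; rewrite f_x; lia.
Qed.

End DistancePotential.

Definition rim_step (s : bool) : nat := if s then 3 else 1.

(* Folding the cover onto the n-cycle: offset m is reached either way round. *)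
Definition wrap_dist (D : bool -> nat -> nat) (n : nat) (s : bool) (m : nat) : nat :=
  minn (D s m) (D s (n - m)).

Lemma modnD_cases m d n : m < n -> d <= n ->
  (m + d < n /\ (m + d) %% n = m + d) \/ (n <= m + d /\ (m + d) %% n = m + d - n).
Proof.
move=> mn dn; case: (ltnP (m + d) n) => h; first by left; rewrite modn_small.
right; split => //.
by rewrite -{1}(subnK h) modnDr modn_small //; lia.
Qed.

Lemma modnB_cases m d n : m < n -> d <= n ->
  (d <= m /\ (m + n - d) %% n = m - d) \/ (m < d /\ (m + n - d) %% n = m + n - d).
Proof.
move=> mn dn; case: (leqP d m) => h; last by right; rewrite modn_small //; lia.
left; split => //.
by rewrite -addnBAC // modnDr modn_small //; lia.
Qed.

Lemma modnD_shift n c i d : c <= n ->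
  ((i + d) %% n + n - c) %% n = ((i + n - c) %% n + d) %% n.
Proof. by move=> cn; rewrite -!addnBA // modnDml modnDml; congr (_ %% n); lia. Qed.

Lemma modnB_shift n c i d : c <= n -> d <= n ->
  ((i + n - d) %% n + n - c) %% n = ((i + n - c) %% n + n - d) %% n.
Proof. by move=> cn dn; rewrite -!addnBA // modnDml modnDml; congr (_ %% n); lia. Qed.

Lemma modnBK n i d : i < n -> d <= n -> ((i + n - d) %% n + d) %% n = i.
Proof. by move=> iN dn; rewrite -addnBA // modnDml -addnA subnK // modnDr modn_small. Qed.

Lemma GP_adj_rim n s (i j : 'I_n) :
  GP_adj n 3 (s, i) (s, j)
  = (j == (i + rim_step s) %% n :> nat) || (i == (j + rim_step s) %% n :> nat).
Proof. by rewrite /GP_adj eqxx; case: s. Qed.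

Lemma GP_adj_spoke n s (i j : 'I_n) : GP_adj n 3 (s, i) (~~ s, j) = (i == j).
Proof. by rewrite /GP_adj; case: s. Qed.

Section WrapDist.
Variables (D : bool -> nat -> nat) (home : bool) (n : nat).
Hypothesis D_rim : forall s m,
  D s m <= D s (m + rim_step s) + 1 /\ D s (m + rim_step s) <= D s m + 1.
Hypothesis D_spoke : forall m, D false m <= D true m + 1 /\ D true m <= D false m + 1.
(* Offsets are taken up to sign: a rim step down from j <= rim_step s lands at rim_step s - j. *)
Hypothesis D_reflect : forall s j, j <= rim_step s -> D s j <= D s (rim_step s - j) + 1.
Hypothesis D_bounds : forall s m, m %/ 3 <= D s m /\ D s m <= m %/ 3 + 4.
Hypothesis D_descent : forall s m, 0 < D s m ->
  (rim_step s <= m /\ D s (m - rim_step s) < D s m)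
  \/ (m < rim_step s /\ D s (rim_step s - m) < D s m) \/ D (~~ s) m < D s m.
Hypothesis D_eq0 : forall s m, D s m = 0 -> s = home /\ m = 0.
Hypothesis D_home : D home 0 = 0.
Hypothesis n_gt16 : 16 < n.

Let rim_step_bounds s : 1 <= rim_step s <= 3. Proof. by case: s. Qed.

Lemma wrap_dist_rim s m : m < n ->
  wrap_dist D n s m <= wrap_dist D n s ((m + rim_step s) %% n) + 1
  /\ wrap_dist D n s ((m + rim_step s) %% n) <= wrap_dist D n s m + 1.
Proof.
move=> mn; have := rim_step_bounds s.
move: (rim_step s) (D_rim s) (@D_reflect s) => d D_rim_s D_reflect_s d3.
have dn : d <= n by lia.
rewrite /wrap_dist; case: (modnD_cases mn dn) => [[h ->]|[h ->]].
  have := D_rim_s m; have := D_rim_s (n - m - d).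
  have -> : n - m - d + d = n - m by lia.
  have -> : n - (m + d) = n - m - d by lia.
  lia.
have := D_reflect_s (n - m) ltac:(lia).
have := D_reflect_s (d - (n - m)) (leq_subr _ _).
have -> : d - (d - (n - m)) = n - m by lia.
have -> : m + d - n = d - (n - m) by lia.
have -> : n - (d - (n - m)) = n - d + (n - m) by lia.
have := D_bounds s (n - d + (n - m)); have := D_bounds s m.
have := D_bounds s (n - m); have := D_bounds s (d - (n - m)).
lia.
Qed.

Lemma wrap_dist_spoke m :
  wrap_dist D n false m <= wrap_dist D n true m + 1
  /\ wrap_dist D n true m <= wrap_dist D n false m + 1.
Proof. by rewrite /wrap_dist; have := D_spoke m; have := D_spoke (n - m); lia. Qed.

Lemma wrap_dist_eq0 s m : m < n -> wrap_dist D n s m = 0 -> s = home /\ m = 0.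
Proof.
rewrite /wrap_dist => mn; case: (leqP (D s m) (D s (n - m))) => Dm h.
  by apply: D_eq0; lia.
by have [_] := @D_eq0 s (n - m) ltac:(lia); lia.
Qed.

Lemma wrap_dist_descent s m : m < n -> 0 < wrap_dist D n s m ->
  wrap_dist D n s ((m + rim_step s) %% n) < wrap_dist D n s m
  \/ wrap_dist D n s ((m + n - rim_step s) %% n) < wrap_dist D n s m
  \/ wrap_dist D n (~~ s) m < wrap_dist D n s m.
Proof.
move=> mn; have := rim_step_bounds s; have := D_descent (s := s).
move: (rim_step s) => d D_descent_s d3.
have dn : d <= n by lia.
rewrite /wrap_dist => pos.
case: (leqP (D s m) (D s (n - m))) => Dm.
  have := D_descent_s m ltac:(lia).
  case: (modnB_cases mn dn) => [[h1 ->]|[h1 ->]];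
    case: (modnD_cases mn dn) => [[h2 ->]|[h2 ->]].
  - lia.
  - lia.
  - have -> : n - (m + n - d) = d - m by lia.
    lia.
  - have -> : n - (m + n - d) = d - m by lia.
    lia.
have := D_descent_s (n - m) ltac:(lia).
have := D_bounds s m; have := D_bounds s (n - m).
case: (modnB_cases mn dn) => [[h1 ->]|[h1 ->]];
  case: (modnD_cases mn dn) => [[h2 ->]|[h2 ->]].
- have -> : n - (m + d) = n - m - d by lia.
  lia.
- have -> : m + d - n = d - (n - m) by lia.
  by case: (ltngtP (n - m) d) => [||->]; [lia|lia|rewrite subnn; lia].
- have -> : n - (m + d) = n - m - d by lia.
  lia.
- have -> : m + d - n = d - (n - m) by lia.
  lia.
Qed.

Variable c : 'I_n.

Definition gp_potential (w : GP_vertex n) : nat :=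
  wrap_dist D n w.1 ((w.2 + n - c) %% n).

Let c_le_n : c <= n. Proof. exact: ltnW. Qed.
Let offset_lt i : (i + n - c) %% n < n. Proof. by rewrite ltn_mod; lia. Qed.

Lemma gp_potential_lipschitz z y : GP_adj n 3 z y -> gp_potential z <= (gp_potential y).+1.
Proof.
case: z y => [s i] [s' j]; have [<-|/negPf s's] := eqVneq s s'.
  rewrite GP_adj_rim /gp_potential /= => /orP[]/eqP->; rewrite modnD_shift //.
    by have := wrap_dist_rim s (offset_lt i); lia.
  by have := wrap_dist_rim s (offset_lt j); lia.
have -> : s' = ~~ s by case: s s' s's => -[].
rewrite GP_adj_spoke /gp_potential /= => /eqP->.
by have := wrap_dist_spoke ((j + n - c) %% n); case: s {s's} => /=; lia.
Qed.

Lemma gp_potential_descent y :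
  0 < gp_potential y -> exists2 y', GP_adj n 3 y y' & gp_potential y' = (gp_potential y).-1.
Proof.
case: y => [s i] pos; have dn : rim_step s <= n by have := rim_step_bounds s; lia.
have next_lt : (i + rim_step s) %% n < n by rewrite ltn_mod; lia.
have prev_lt : (i + n - rim_step s) %% n < n by rewrite ltn_mod; lia.
have close y' : GP_adj n 3 (s, i) y' -> gp_potential y' < gp_potential (s, i) ->
    exists2 y'', GP_adj n 3 (s, i) y'' & gp_potential y'' = (gp_potential (s, i)).-1.
  by move=> adj lt; exists y' => //; have := gp_potential_lipschitz adj; lia.
case: (wrap_dist_descent (offset_lt i) pos) => [|[]] lt.
- by apply: (close (s, Ordinal next_lt)); rewrite ?GP_adj_rim ?eqxx // /gp_potential modnD_shift.
- apply: (close (s, Ordinal prev_lt)); first by rewrite GP_adj_rim /= modnBK ?eqxx ?orbT.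
  by rewrite /gp_potential modnB_shift.
- by apply: (close (~~ s, i)); rewrite ?GP_adj_spoke.
Qed.

Lemma gp_potential_eq0 y : gp_potential y = 0 -> y = (home, c).
Proof.
case: y => [s i]; rewrite /gp_potential /= => /(wrap_dist_eq0 (offset_lt i))[-> off0].
congr (_, _); apply: val_inj => /=; have := ltn_ord i; have := ltn_ord c.
case: (ltngtP i c) => // ic cN iN.
- by move: off0; rewrite modn_small; lia.
- move: off0; have -> : i + n - c = i - c + n by lia.
  by rewrite modnDr modn_small; lia.
Qed.

Lemma dist_GP3 w : dist (GP_adj n 3) w (home, c) = wrap_dist D n w.1 ((w.2 + n - c) %% n).
Proof.
apply: (dist_potential (f := gp_potential)).
- exact: gp_potential_lipschitz.
- exact: gp_potential_descent.
- exact: gp_potential_eq0.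
- by rewrite /gp_potential /= addnC addnK modnn /wrap_dist D_home min0n.
- rewrite card_prod card_bool card_ord /gp_potential /wrap_dist.
  case: w => s i /=; have := D_bounds s ((i + n - c) %% n); have := offset_lt i.
  by move: (_ %% n) => m; lia.
Qed.

End WrapDist.

(* Distances in the cover from u_0 (resp. v_0) to u_m (s = false) and v_m (s = true), m >= 0. *)
Definition ladder_u (s : bool) (m : nat) : nat :=
  if s then m %/ 3 + 1 + m %% 3 else minn m (m %/ 3 + 2 + m %% 3).

Definition ladder_v (s : bool) (m : nat) : nat :=
  if s then m %/ 3 + m %% 3 + 2 * minn (m %% 3) 1 else m %/ 3 + 1 + m %% 3.

Lemma ladder_u_rim s m :
  ladder_u s m <= ladder_u s (m + rim_step s) + 1
  /\ ladder_u s (m + rim_step s) <= ladder_u s m + 1.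
Proof. by case: s; rewrite /ladder_u /rim_step; lia. Qed.

Lemma ladder_v_rim s m :
  ladder_v s m <= ladder_v s (m + rim_step s) + 1
  /\ ladder_v s (m + rim_step s) <= ladder_v s m + 1.
Proof. by case: s; rewrite /ladder_v /rim_step; lia. Qed.

Lemma ladder_u_spoke m :
  ladder_u false m <= ladder_u true m + 1 /\ ladder_u true m <= ladder_u false m + 1.
Proof. by rewrite /ladder_u; lia. Qed.

Lemma ladder_v_spoke m :
  ladder_v false m <= ladder_v true m + 1 /\ ladder_v true m <= ladder_v false m + 1.
Proof. by rewrite /ladder_v; lia. Qed.

Lemma ladder_u_reflect s j : j <= rim_step s -> ladder_u s j <= ladder_u s (rim_step s - j) + 1.
Proof. by case: s; rewrite /rim_step; case: j => [|[|[|[|j]]]]. Qed.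

Lemma ladder_v_reflect s j : j <= rim_step s -> ladder_v s j <= ladder_v s (rim_step s - j) + 1.
Proof. by case: s; rewrite /rim_step; case: j => [|[|[|[|j]]]]. Qed.

Lemma ladder_u_bounds s m : m %/ 3 <= ladder_u s m /\ ladder_u s m <= m %/ 3 + 4.
Proof. by case: s; rewrite /ladder_u; lia. Qed.

Lemma ladder_v_bounds s m : m %/ 3 <= ladder_v s m /\ ladder_v s m <= m %/ 3 + 4.
Proof. by case: s; rewrite /ladder_v; lia. Qed.

Lemma ladder_u_descent s m : 0 < ladder_u s m ->
  (rim_step s <= m /\ ladder_u s (m - rim_step s) < ladder_u s m)
  \/ (m < rim_step s /\ ladder_u s (rim_step s - m) < ladder_u s m)
  \/ ladder_u (~~ s) m < ladder_u s m.
Proof. by case: s; rewrite /ladder_u /rim_step /=; lia. Qed.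

Lemma ladder_v_descent s m : 0 < ladder_v s m ->
  (rim_step s <= m /\ ladder_v s (m - rim_step s) < ladder_v s m)
  \/ (m < rim_step s /\ ladder_v s (rim_step s - m) < ladder_v s m)
  \/ ladder_v (~~ s) m < ladder_v s m.
Proof. by case: s; rewrite /ladder_v /rim_step /=; lia. Qed.

Lemma ladder_u_eq0 s m : ladder_u s m = 0 -> s = false /\ m = 0.
Proof. by case: s; rewrite /ladder_u; lia. Qed.

Lemma ladder_v_eq0 s m : ladder_v s m = 0 -> s = true /\ m = 0.
Proof. by case: s; rewrite /ladder_v; lia. Qed.

Lemma ladder_u_mono s m m' : m + 8 <= m' -> ladder_u s m <= ladder_u s m'.
Proof. by case: s; rewrite /ladder_u; lia. Qed.

Lemma ladder_v_mono s m m' : m + 8 <= m' -> ladder_v s m <= ladder_v s m'.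
Proof. by case: s; rewrite /ladder_v; lia. Qed.

Lemma ladder_u_add3 s m : 3 <= m -> ladder_u s (m + 3) = (ladder_u s m).+1.
Proof. by case: s; rewrite /ladder_u; lia. Qed.

Lemma ladder_v_add3 s m : ladder_v s (m + 3) = (ladder_v s m).+1.
Proof. by case: s; rewrite /ladder_v; lia. Qed.

Lemma dist_GP3_u n (c : 'I_n) w : 16 < n ->
  dist (GP_adj n 3) w (false, c) = wrap_dist ladder_u n w.1 ((w.2 + n - c) %% n).
Proof.
move=> n_gt16; apply: (dist_GP3 ladder_u_rim ladder_u_spoke ladder_u_reflect
  ladder_u_bounds ladder_u_descent ladder_u_eq0 _ n_gt16).
by rewrite /ladder_u.
Qed.

Lemma dist_GP3_v n (c : 'I_n) w : 16 < n ->
  dist (GP_adj n 3) w (true, c) = wrap_dist ladder_v n w.1 ((w.2 + n - c) %% n).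
Proof.
move=> n_gt16; apply: (dist_GP3 ladder_v_rim ladder_v_spoke ladder_v_reflect
  ladder_v_bounds ladder_v_descent ladder_v_eq0 _ n_gt16).
by rewrite /ladder_v.
Qed.

Lemma modn_pred k n : 0 < k < n -> (k + n - 1) %% n = k.-1.
Proof. by move=> kn; rewrite -addnBAC ?modnDr ?modn_small //; lia. Qed.

Lemma wrap_distE D n s m :
  (forall m', m + 8 <= m' -> D s m <= D s m') -> m + 8 <= n - m -> wrap_dist D n s m = D s m.
Proof. by move=> mono mn; apply/minn_idPl/mono. Qed.

Lemma wrap_distE_rev D n s m :
  (forall m', n - m + 8 <= m' -> D s (n - m) <= D s m') -> n - m + 8 <= m ->
  wrap_dist D n s m = D s (n - m).
Proof. by move=> mono mn; apply/minn_idPr/mono. Qed.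

Lemma wrap_dist_add3 D n s m : m <= n ->
  D s (m + 3) = (D s m).+1 -> D s (n - m + 3) = (D s (n - m)).+1 ->
  wrap_dist D (n + 6) s (m + 3) = (wrap_dist D n s m).+1.
Proof.
move=> mn Dm Dnm; rewrite /wrap_dist -minnSS -Dm -Dnm.
by have -> : n + 6 - (m + 3) = n - m + 3 by lia.
Qed.

Definition count_sides (R : rel nat) (a b : bool -> nat) : nat :=
  R (a false) (b false) + R (a true) (b true).

(* [nearer ltn n i] ([nearer gtn n i]) counts the vertices among u_i, v_i strictly nearer
   to u_0 than to v_1 (to v_1 than to u_0). *)
Definition nearer (R : rel nat) (n i : nat) : nat :=
  count_sides R (fun s => wrap_dist ladder_u n s i)
    (fun s => wrap_dist ladder_v n s ((i + n - 1) %% n)).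

Definition left_profile (R : rel nat) (i : nat) : nat :=
  count_sides R (ladder_u ^~ i) (ladder_v ^~ i.-1).

Definition right_profile (R : rel nat) (j : nat) : nat :=
  count_sides R (ladder_u ^~ j) (ladder_v ^~ j.+1).

Lemma nearer_left R n i : 0 < i -> 2 * i + 8 <= n -> nearer R n i = left_profile R i.
Proof.
move=> i_gt0 in8; rewrite /nearer modn_pred; last lia.
by rewrite /count_sides !(wrap_distE (@ladder_u_mono _ _))
  ?(wrap_distE (@ladder_v_mono _ _)) //; lia.
Qed.

Lemma nearer_right R n j : 0 < j -> 2 * j + 10 <= n ->
  nearer R n (n - j) = right_profile R j.
Proof.
move=> j_gt0 jn; rewrite /nearer modn_pred; last lia.
have -> : (n - j).-1 = n - j.+1 by lia.
by rewrite /count_sides !(wrap_distE_rev (@ladder_u_mono _ _))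
  ?(wrap_distE_rev (@ladder_v_mono _ _)) ?subKn //; lia.
Qed.

Lemma nearer0 R n : 10 <= n -> nearer R n 0 = right_profile R 0.
Proof.
move=> n10; rewrite /nearer add0n modn_small; last lia.
by rewrite /count_sides !(wrap_distE (@ladder_u_mono _ _))
  ?(wrap_distE_rev (@ladder_v_mono _ _)) ?subKn //; lia.
Qed.

Lemma nearer_add6 R n i : (forall a b, R a.+1 b.+1 = R a b) -> 3 <= i -> i + 3 <= n ->
  nearer R (n + 6) (i + 3) = nearer R n i.
Proof.
move=> R_shift i3 in3.
have Eu s : wrap_dist ladder_u (n + 6) s (i + 3) = (wrap_dist ladder_u n s i).+1.
  by apply: wrap_dist_add3; rewrite ?ladder_u_add3 //; lia.
have Ev s : wrap_dist ladder_v (n + 6) s (i.-1 + 3) = (wrap_dist ladder_v n s i.-1).+1.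
  by apply: wrap_dist_add3; rewrite ?ladder_v_add3 //; lia.
rewrite /nearer !modn_pred; [|lia|lia].
have -> : (i + 3).-1 = i.-1 + 3 by lia.
by rewrite /count_sides !Eu !Ev !R_shift.
Qed.

Lemma sum_nearer_left R n a b : 0 < a -> 2 * b + 6 <= n ->
  \sum_(a <= i < b) nearer R n i = \sum_(a <= i < b) left_profile R i.
Proof. by move=> a_gt0 bn; apply: eq_big_nat => i /andP[ai ib]; apply: nearer_left; lia. Qed.

Lemma sum_nearer_right R n b : 2 * b + 10 <= n ->
  \sum_(n - b <= i < n) nearer R n i = \sum_(1 <= j < b.+1) right_profile R j.
Proof.
elim: b => [|b IHb] bn; first by rewrite subn0 !big_geq.
rewrite big_ltn; last lia.
have -> : (n - b.+1).+1 = n - b by lia.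
by rewrite IHb ?nearer_right ?(@big_nat_recr _ _ _ b.+1 1) 1?addnC //=; lia.
Qed.

Lemma sum_nearer_split R n a b : 0 < a -> 2 * a + 6 <= n -> 2 * b + 10 <= n ->
  \sum_(0 <= i < n) nearer R n i
  = right_profile R 0 + \sum_(1 <= i < a) left_profile R i
    + \sum_(a <= i < n - b) nearer R n i + \sum_(1 <= j < b.+1) right_profile R j.
Proof.
move=> a_gt0 an bn.
rewrite big_ltn ?nearer0; [|lia|lia].
rewrite (@big_cat_nat _ _ _ a) //; last lia.
rewrite (@big_cat_nat _ _ _ (n - b) a) ?(@sum_nearer_left R n 1 a)
  ?(@sum_nearer_right R n b) ?addnA //; lia.
Qed.

Lemma sum_nearer_add6 R n : (forall a b, R a.+1 b.+1 = R a b) -> 16 < n ->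
  \sum_(0 <= i < n + 6) nearer R (n + 6) i
  = \sum_(0 <= i < n) nearer R n i
    + (\sum_(3 <= i < 6) left_profile R i + \sum_(3 <= j < 6) right_profile R j).
Proof.
move=> R_shift n_gt16.
rewrite (@sum_nearer_split R (n + 6) (3 + 3) 5) ?(@sum_nearer_split R n 3 2); [|lia..].
rewrite big_addn (_ : n + 6 - 5 - 3 = n - 2); last lia.
rewrite (@eq_big_nat _ _ _ 3 (n - 2) _ (nearer R n)); last first.
  by move=> i /andP[i3 in2]; apply: nearer_add6 => //; lia.
have split3 F : \sum_(1 <= i < 6) F i = \sum_(1 <= i < 3) F i + \sum_(3 <= i < 6) F i.
  by rewrite (big_cat_nat (n := 3)).
rewrite !split3; lia.
Qed.

Lemma sum_nearer_lt n : 16 < n ->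
  \sum_(0 <= i < n) nearer ltn n i < \sum_(0 <= i < n) nearer gtn n i.
Proof.
elim/ltn_ind: n => n IHn n_gt16; have [n_lt23|n_ge23] := ltnP n 23.
  have : n = 17 \/ n = 18 \/ n = 19 \/ n = 20 \/ n = 21 \/ n = 22 by lia.
  by case=> [|[|[|[|[|]]]]] ->; rewrite unlock.
have -> : n = n - 6 + 6 by lia.
rewrite !sum_nearer_add6 //; [|lia..].
have inc_ltn : \sum_(3 <= i < 6) left_profile ltn i + \sum_(3 <= j < 6) right_profile ltn j = 3.
  by rewrite unlock.
have inc_gtn : \sum_(3 <= i < 6) left_profile gtn i + \sum_(3 <= j < 6) right_profile gtn j = 5.
  by rewrite unlock.
by have := IHn (n - 6) ltac:(lia) ltac:(lia); lia.
Qed.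

Lemma card_GP_set n (P : pred (GP_vertex n)) :
  #|[set w | P w]| = \sum_(i < n) (P (false, i) + P (true, i)).
Proof.
rewrite -sum1_card big_mkcond /=.
rewrite (eq_bigr (fun w => (P (w.1, w.2) : nat))); last by case=> s i _; rewrite inE; case: (P _).
rewrite -(pair_big xpredT xpredT (fun s i => (P (s, i) : nat))) /= big_bool -big_split /=.
by apply: eq_bigr => i _; rewrite addnC.
Qed.

Section PairU0V1.
Variables (n : nat) (n_gt0 : 0 < n) (n_gt1 : 1 < n).
Hypothesis n_gt16 : 16 < n.
Let u0 : GP_vertex n := (false, Ordinal n_gt0).
Let v1 : GP_vertex n := (true, Ordinal n_gt1).

Lemma dist_u0_v1 : dist (GP_adj n 3) u0 v1 = 2.
Proof.
rewrite dist_GP3_v //= add0n modn_small; last lia.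
by rewrite /wrap_dist subKn /ladder_v; lia.
Qed.

Lemma card_nearer (R : rel nat) :
  #|[set w | R (dist (GP_adj n 3) w u0) (dist (GP_adj n 3) w v1)]|
  = \sum_(0 <= i < n) nearer R n i.
Proof.
rewrite card_GP_set big_mkord; apply: eq_bigr => i _.
by rewrite !dist_GP3_u ?dist_GP3_v //= subn0 modnDr modn_small.
Qed.

Lemma card_W_u0_v1 : #|Wset (GP_adj n 3) u0 v1| = \sum_(0 <= i < n) nearer ltn n i.
Proof. exact: card_nearer. Qed.

Lemma card_W_v1_u0 : #|Wset (GP_adj n 3) v1 u0| = \sum_(0 <= i < n) nearer gtn n i.
Proof. exact: card_nearer. Qed.
End PairU0V1.

Theorem proposition2p2 (n : nat) :
  16 < n -> ~ dist_balanced (GP_adj n 3) 2.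
Proof.
move=> n_gt16 balanced.
have n_gt0 : 0 < n by lia.
have n_gt1 : 1 < n by lia.
have := balanced _ _ (dist_u0_v1 n_gt0 n_gt1 n_gt16).
rewrite card_W_u0_v1 // card_W_v1_u0 // => W_balanced.
by have := sum_nearer_lt n_gt16; rewrite W_balanced ltnn.
Qed.
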